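(* Let $\mathcal{G}=(\mathcal{N},\mathcal{E})$ be a finite rooted tree whose edges are directed from parent to child, and let each edge $e\in\mathcal{E}$ carry a strictly positive weight $w(e)>0$. Call a set of edges $\mathcal{E}'\subseteq\mathcal{E}$ a matching (feasible schedule) if no two distinct edges of $\mathcal{E}'$ share a common vertex, and call a matching a maximum weighted matching (MWM) of $\mathcal{G}$ if it maximizes $\sum_{e\in\mathcal{E}'} w(e)$ over all matchings of $\mathcal{G}$. Let $n_k$ be an arbitrary internal node of $\mathcal{G}$ (i.e., a node with at least one child), and let $\{n_j\}_k$ be the set of its children. Then every MWM of $\mathcal{G}$ contains an edge having as one of its endpoints either $n_k$ or some element of $\{n_j\}_k$.
   Context: The tree models an Integrated Access and Backhaul network in spanning-tree topology: nodes are the IAB-donor (root), IAB-nodes, and representative user nodes; each directed edge $e_{n_j\to n_k}$ goes from a parent node $n_j$ to its child $n_k$. The weight of an edge is the (positive) utility obtained when scheduling that link, and the utility of a set of scheduled links is the sum of their weights. *)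

From mathcomp Require Import all_boot all_order all_algebra.
Set Implicit Arguments. Unset Strict Implicit. Unset Printing Implicit Defensive.
Import Order.TTheory GRing.Theory Num.Theory.
Local Open Scope ring_scope.

(* A finite rooted tree on the node type T, with root r and set E of directed
   edges (parent, child):
   - no edge enters the root;
   - every non-root node has exactly one parent;
   - every node is reachable from the root along directed edges. *)
Definition rooted_tree (T : finType) (E : {set T * T}) (r : T) : Prop :=
  [/\ forall u : T, (u, r) \notin E,
      forall v : T, v != r -> #|[set u | (u, v) \in E]| = 1%N
    & forall v : T, connect (fun x y => (x, y) \in E) r v].

Definition share_vertex (T : finType) (e1 e2 : T * T) : bool :=
  [|| e1.1 == e2.1, e1.1 == e2.2, e1.2 == e2.1 | e1.2 == e2.2].

Definition is_matching (T : finType) (E M : {set T * T}) : Prop :=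
  M \subset E /\
  (forall e1 e2, e1 \in M -> e2 \in M -> e1 != e2 -> ~~ share_vertex e1 e2).

Definition weight_of (R : numDomainType) (T : finType) (w : T * T -> R)
  (M : {set T * T}) : R := \sum_(e in M) w e.

Definition is_MWM (R : numDomainType) (T : finType) (E : {set T * T})
  (w : T * T -> R) (M : {set T * T}) : Prop :=
  is_matching E M /\
  (forall M' : {set T * T}, is_matching E M' -> weight_of w M' <= weight_of w M).

(* If no edge of a matching [M] touched [nk] or one of its children [v], the
   edge [(nk, v)] could be added to [M], strictly increasing its weight. *)

From mathcomp Require Import all_boot all_order all_algebra.
Set Implicit Arguments. Unset Strict Implicit. Unset Printing Implicit Defensive.
Import Order.TTheory GRing.Theory Num.Theory.
Local Open Scope ring_scope.

Lemma share_vertexC (T : finType) (e1 e2 : T * T) :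
  share_vertex e1 e2 = share_vertex e2 e1.
Proof.
case: e1 e2 => [a b] [c d]; rewrite /share_vertex /=.
rewrite (eq_sym c) (eq_sym c b) (eq_sym d) (eq_sym d b).
by congr (_ || _); exact: orbCA.
Qed.

Lemma share_vertex_refl (T : finType) (e : T * T) : share_vertex e e.
Proof. by rewrite /share_vertex eqxx. Qed.

Lemma is_matching_setU1 (T : finType) (E M : {set T * T}) (e : T * T) :
  is_matching E M -> e \in E ->
  (forall f, f \in M -> ~~ share_vertex f e) ->
  is_matching E (e |: M).
Proof.
move=> [sME mM] eE free_e; split; first by rewrite subUset sub1set eE sME.
move=> e1 e2; rewrite !in_setU1 => /predU1P[->|e1M] /predU1P[->|e2M].
- by rewrite eqxx.
- by rewrite share_vertexC free_e.
- by rewrite free_e.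
- exact: mM.
Qed.

Lemma weight_of_setU1 (R : numDomainType) (T : finType) (w : T * T -> R)
    (M : {set T * T}) (e : T * T) :
  e \notin M -> weight_of w (e |: M) = w e + weight_of w M.
Proof. exact: big_setU1. Qed.

Lemma MWM_meets_pos_edge (R : numDomainType) (T : finType) (E : {set T * T})
    (w : T * T -> R) (M : {set T * T}) (e : T * T) :
  is_MWM E w M -> e \in E -> 0 < w e ->
  exists2 f, f \in M & share_vertex f e.
Proof.
move=> [matM maxM] eE we_gt0.
have [/exists_inP[f fM fe]|free_e] := boolP [exists f in M, share_vertex f e].
  by exists f.
have {}free_e f : f \in M -> ~~ share_vertex f e.
  by move=> fM; apply: contra free_e => fe; apply/exists_inP; exists f.
have eNM : e \notin M by apply/negP => /free_e; rewrite share_vertex_refl.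
have := maxM _ (is_matching_setU1 matM eE free_e).
by rewrite weight_of_setU1 // gerDr (lt_geF we_gt0).
Qed.

Theorem lemma1 (R : realFieldType) (T : finType) (E : {set T * T}) (r : T)
  (w : T * T -> R) (nk : T) :
  rooted_tree E r ->
  (forall e, e \in E -> 0 < w e) ->
  (exists v, (nk, v) \in E) ->
  forall M : {set T * T}, is_MWM E w M ->
  exists2 e, e \in M &
    [|| e.1 == nk, e.2 == nk, (nk, e.1) \in E | (nk, e.2) \in E].
Proof.
move=> _ w_gt0 [v Ev] M mwmM.
have [[a b] abM] := MWM_meets_pos_edge mwmM Ev (w_gt0 _ Ev).
rewrite /share_vertex /= => /or4P share_ab; exists (a, b) => //=.
by case: share_ab => /eqP->; rewrite ?eqxx ?Ev ?orbT.
Qed.
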